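(* Under the hypotheses of the PC key inequality (with $\beta>0$, $\boldsymbol{H}_k=\boldsymbol{Q}_k\boldsymbol{M}_k^{-1}$ symmetric positive definite, $\boldsymbol{G}_k=\boldsymbol{Q}_k^T+\boldsymbol{Q}_k-\beta\boldsymbol{M}_k^T\boldsymbol{H}_k\boldsymbol{M}_k\succ0$, and $\boldsymbol{w}^{k+1}=\boldsymbol{w}^k-\beta\boldsymbol{M}_k(\boldsymbol{w}^k-\tilde{\boldsymbol{w}}^k)$), for every $\boldsymbol{w}^*\in\Omega^*$, $$\|\boldsymbol{w}^*-\boldsymbol{w}^{k+1}\|_{\boldsymbol{H}_k}^2\le\|\boldsymbol{w}^*-\boldsymbol{w}^k\|_{\boldsymbol{H}_k}^2-\beta\|\boldsymbol{w}^k-\tilde{\boldsymbol{w}}^k\|_{\boldsymbol{G}_k}^2.$$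
   Context: $\mathcal{X}\subset\mathbb{R}^n$ nonempty closed convex; $f$ convex; $\phi_1,\dots,\phi_m$ convex, continuously differentiable; $\Phi=(\phi_1,\dots,\phi_m)^T$ with $m\times n$ Jacobian $\mathcal{D}\Phi$; $\Omega=\mathcal{X}\times\mathbb{R}^m_+$; $\boldsymbol{\Gamma}(\boldsymbol{w})=(\mathcal{D}\Phi(\boldsymbol{x})^T\boldsymbol{\lambda},-\Phi(\boldsymbol{x}))$; $\Omega^*$ is the set of $\boldsymbol{w}^*=(\boldsymbol{x}^*,\boldsymbol{\lambda}^* )\in\Omega$ with $f(\boldsymbol{x})-f(\boldsymbol{x}^* )+(\boldsymbol{w}-\boldsymbol{w}^* )^T\boldsymbol{\Gamma}(\boldsymbol{w}^* )\ge0$ for all $\boldsymbol{w}\in\Omega$. $\boldsymbol{Q}_k=\begin{pmatrix} r_k\boldsymbol{I}_n & -\mathcal{D}\Phi(\tilde{\boldsymbol{x}}^k)^T\\ \boldsymbol{0} & s_k\boldsymbol{I}_m\end{pmatrix}$ ($r_k,s_k>0$), $\boldsymbol{M}_k$ invertible, and $\tilde{\boldsymbol{w}}^k\in\Omega$ satisfies $f(\boldsymbol{x})-f(\tilde{\boldsymbol{x}}^k)+(\boldsymbol{w}-\tilde{\boldsymbol{w}}^k)^T\boldsymbol{\Gamma}(\tilde{\boldsymbol{w}}^k)\ge(\boldsymbol{w}-\tilde{\boldsymbol{w}}^k)^T\boldsymbol{Q}_k(\boldsymbol{w}^k-\tilde{\boldsymbol{w}}^k)$ for all $\boldsymbol{w}\in\Omega$.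 $\|\boldsymbol{v}\|_{\boldsymbol{H}}^2=\boldsymbol{v}^T\boldsymbol{H}\boldsymbol{v}$. *)

From HB Require Import structures.
From mathcomp Require Import all_boot all_order all_algebra.
From mathcomp Require Import all_classical all_reals all_analysis.
Set Implicit Arguments. Unset Strict Implicit. Unset Printing Implicit Defensive.
Import Order.TTheory GRing.Theory Num.Theory.
Import numFieldNormedType.Exports.
Local Open Scope classical_set_scope.
Local Open Scope ring_scope.

(* Vectors of R^n are represented as row vectors 'rV[R]_n; a column-vector
   expression v^T A u of the paper is (v *m A *m u^T) 0 0 here. *)

Definition bilf (R : ringType) (p : nat) (u : 'rV[R]_p) (A : 'M[R]_p) (v : 'rV[R]_p) : R :=
  (u *m A *m v^T) ord0 ord0.

Definition qf (R : ringType) (p : nat) (H : 'M[R]_p) (v : 'rV[R]_p) : R := bilf v H v.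

Definition dotv (R : ringType) (p : nat) (u v : 'rV[R]_p) : R := (u *m v^T) ord0 ord0.

Definition posdef (R : numDomainType) (p : nat) (A : 'M[R]_p) : Prop :=
  forall v : 'rV[R]_p, v != 0 -> 0 < qf A v.

(* Jacobian D Phi(x) as an m x n matrix (the library's jacobian is its
   transpose, acting on row vectors: 'D_v Phi x = v *m jacobian Phi x). *)
Definition DPhi (R : realType) (n m : nat) (Phi : 'rV[R]_n -> 'rV[R]_m) (x : 'rV[R]_n)
  : 'M[R]_(m, n) := (jacobian Phi x)^T.

Definition pairw (R : ringType) (n m : nat) (x : 'rV[R]_n) (l : 'rV[R]_m) : 'rV[R]_(n + m) :=
  row_mx x l.

Definition Gam (R : realType) (n m : nat) (Phi : 'rV[R]_n -> 'rV[R]_m)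
  (x : 'rV[R]_n) (l : 'rV[R]_m) : 'rV[R]_(n + m) :=
  row_mx (l *m DPhi Phi x) (- Phi x).

Definition Omega (R : realType) (n m : nat) (X : set 'rV[R]_n)
  (x : 'rV[R]_n) (l : 'rV[R]_m) : Prop :=
  X x /\ forall i, 0 <= l ord0 i.

Definition OmegaStar (R : realType) (n m : nat) (X : set 'rV[R]_n) (f : 'rV[R]_n -> R)
  (Phi : 'rV[R]_n -> 'rV[R]_m) (xs : 'rV[R]_n) (ls : 'rV[R]_m) : Prop :=
  Omega X xs ls /\
  forall (x : 'rV[R]_n) (l : 'rV[R]_m), Omega X x l ->
    0 <= f x - f xs + dotv (pairw x l - pairw xs ls) (Gam Phi xs ls).

Definition Qmat (R : realType) (n m : nat) (Phi : 'rV[R]_n -> 'rV[R]_m)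
  (r s : R) (xt : 'rV[R]_n) : 'M[R]_(n + m) :=
  block_mx (r%:M) (- (DPhi Phi xt)^T) 0 (s%:M).

Definition convexf (R : realType) (n : nat) (g : 'rV[R]_n -> R) : Prop :=
  forall (x y : 'rV[R]_n) (t : R), 0 <= t <= 1 ->
    g (t *: x + (1 - t) *: y) <= t * g x + (1 - t) * g y.

Definition convexs (R : realType) (n : nat) (X : set 'rV[R]_n) : Prop :=
  forall (x y : 'rV[R]_n) (t : R), 0 <= t <= 1 -> X x -> X y ->
    X (t *: x + (1 - t) *: y).

From HB Require Import structures.
From mathcomp Require Import all_boot all_order all_algebra.
From mathcomp Require Import all_classical all_reals all_analysis.
From mathcomp Require Import ring lra.
Import Order.TTheory GRing.Theory Num.Theory.
Import numFieldNormedType.Exports.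
Local Open Scope classical_set_scope.
Local Open Scope ring_scope.

(* Adding the variational inequality of the prediction at w = w^*, the
   optimality of w^* tested at w = w~, and the monotonicity of Gamma (which
   comes from the first-order convexity of the phi_i and lambda >= 0) gives
   the key inequality (w~ - w^* )^T Q (w^k - w~) >= 0.  Expanding the
   H-norm of w^* - w^{k+1} with H M = Q and H symmetric then shows that the
   claimed inequality differs from an identity by exactly
   2 beta (w^* - w~)^T Q (w^k - w~) <= 0. *)

Lemma convexf_jacobian_le (R : realType) n m (g : 'rV[R]_n -> 'rV[R]_m)
    (x y : 'rV[R]_n) (i : 'I_m) :
  convexf (fun z => g z ord0 i) -> differentiable g x ->
  ((y - x) *m jacobian g x) ord0 i <= g y ord0 i - g x ord0 i.
Proof.
move=> cvx dg; rewrite -deriveEjacobian //.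
have dv : derivable g x (y - x) by apply: diff_derivable.
pose F h := (h^-1 *: ((g \o shift x) (h *: (y - x)) - g x)) ord0 i.
have cvgF : F h @[h --> 0^'] --> ('D_(y - x) g x) ord0 i.
  exact: (continuous_cvg _ (@coord_continuous R 1 m ord0 i _)).
have cvgF_right : F h @[h --> 0^'+] --> ('D_(y - x) g x) ord0 i.
  move=> A /cvgF; rewrite /= !near_simpl /= !near_withinE.
  by apply: filterS => z Hz zp; apply: Hz; exact: lt0r_neq0.
rewrite -(cvg_lim _ cvgF_right) //.
apply: limr_le; first by apply/cvg_ex; eexists; exact: cvgF_right.
near=> h.
have h_gt0 : 0 < h by near: h; exact: nbhs_right_gt.
have h_le1 : h <= 1 by near: h; apply: nbhs_right_le; exact: ltr01.
have := cvx y x h; rewrite h_le1 (ltW h_gt0) => /(_ isT).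
have -> : h *: y + (1 - h) *: x = h *: (y - x) + x.
  by rewrite scalerBl scale1r scalerBr addrCA addrC.
rewrite /F /= !mxE => cvx_yx.
rewrite ler_pdivrMl //; nra.
Unshelve. all: by end_near.
Qed.

Section BilinearForm.
Variables (R : comNzRingType) (p : nat).
Implicit Types (u v w : 'rV[R]_p) (A B : 'M[R]_p).

Lemma bilfDl u v w A : bilf (u + v) A w = bilf u A w + bilf v A w.
Proof. by rewrite /bilf !mulmxDl mxE. Qed.

Lemma bilfBl u v w A : bilf (u - v) A w = bilf u A w - bilf v A w.
Proof. by rewrite bilfDl /bilf !mulNmx [in X in _ + X]mxE. Qed.

Lemma bilfZl u w A c : bilf (c *: u) A w = c * bilf u A w.
Proof. by rewrite /bilf -!scalemxAl mxE. Qed.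

Lemma bilfDr u v w A : bilf w A (u + v) = bilf w A u + bilf w A v.
Proof. by rewrite /bilf linearD /= mulmxDr mxE. Qed.

Lemma bilfZr u w A c : bilf w A (c *: u) = c * bilf w A u.
Proof. by rewrite /bilf linearZ /= -scalemxAr mxE. Qed.

Lemma bilfDm u w A B : bilf u (A + B) w = bilf u A w + bilf u B w.
Proof. by rewrite /bilf mulmxDr mulmxDl mxE. Qed.

Lemma bilfBm u w A B : bilf u (A - B) w = bilf u A w - bilf u B w.
Proof. by rewrite bilfDm /bilf mulmxN mulNmx [in X in _ + X]mxE. Qed.

Lemma bilfZm u w A c : bilf u (c *: A) w = c * bilf u A w.
Proof. by rewrite /bilf -scalemxAr -scalemxAl mxE. Qed.

Lemma bilf_tr u w A : bilf u A^T w = bilf w A u.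
Proof.
rewrite /bilf.
have -> : u *m A^T *m w^T = (w *m A *m u^T)^T by rewrite !trmx_mul trmxK mulmxA.
by rewrite mxE.
Qed.

Lemma bilf_mulmxl u v A B : bilf (u *m B) A v = bilf u (B *m A) v.
Proof. by rewrite /bilf !mulmxA. Qed.

Lemma bilf_mulmxr u v A B : bilf u A (v *m B^T) = bilf u (A *m B) v.
Proof. by rewrite /bilf trmx_mul trmxK !mulmxA. Qed.

End BilinearForm.

Lemma qf_correction_step {R : comNzRingType} {p : nat} {H Q M : 'M[R]_p} (beta : R)
    (ws wk wt : 'rV[R]_p) :
  H^T = H -> H *m M = Q ->
  qf H (ws - (wk - beta *: (M *m (wk - wt)^T)^T))
    = qf H (ws - wk) - beta * qf (Q^T + Q - beta *: (M^T *m H *m M)) (wk - wt)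
      + 2 * beta * bilf (ws - wt) Q (wk - wt).
Proof.
move=> H_sym HM_Q.
set d := wk - wt; set a := ws - wk.
have -> : ws - (wk - beta *: (M *m d^T)^T) = a + beta *: (d *m M^T).
  by rewrite trmx_mul trmxK opprB addrCA addrC.
have cross_sym : bilf (d *m M^T) H a = bilf a H (d *m M^T).
  by rewrite -{1}H_sym bilf_tr.
have cross : bilf a H (d *m M^T) = bilf (ws - wt) Q d - bilf d Q d.
  rewrite bilf_mulmxr HM_Q -bilfBl; congr bilf.
  by rewrite /a /d opprB addrA subrK.
have corr : bilf (d *m M^T) H (d *m M^T) = bilf d (M^T *m H *m M) d.
  by rewrite bilf_mulmxl bilf_mulmxr.
clearbody a d.
rewrite /qf bilfDl !bilfDr !bilfZl !bilfZr cross_sym cross corr.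
rewrite bilfBm bilfDm bilfZm bilf_tr.
move: (bilf a H a) (bilf (ws - wt) Q d) (bilf d Q d) (bilf d (M^T *m H *m M) d).
by move=> ? ? ? ?; ring.
Qed.

Section DotProduct.
Variable R : comNzRingType.

Lemma dotv_sum p (u v : 'rV[R]_p) : dotv u v = \sum_j u ord0 j * v ord0 j.
Proof. by rewrite /dotv mxE; apply: eq_bigr => j _; rewrite mxE. Qed.

Lemma dotv_row_mx n m (x x' : 'rV[R]_n) (l l' : 'rV[R]_m) :
  dotv (row_mx x l) (row_mx x' l') = dotv x x' + dotv l l'.
Proof. by rewrite /dotv tr_row_mx mul_row_col mxE. Qed.

Lemma dotv_mulmx_tr n m (x : 'rV[R]_n) (l : 'rV[R]_m) (A : 'M[R]_(n, m)) :
  dotv x (l *m A^T) = dotv (x *m A) l.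
Proof. by rewrite /dotv trmx_mul trmxK mulmxA. Qed.

Lemma pairwB n m (x x' : 'rV[R]_n) (l l' : 'rV[R]_m) :
  pairw x l - pairw x' l' = pairw (x - x') (l - l').
Proof. by rewrite /pairw opp_row_mx add_row_mx. Qed.

End DotProduct.

(* The multiplier part of the monotonicity of Gamma: g, g' stand for the
   linearizations D Phi(x) (x' - x), D Phi(x') (x - x'). *)
Lemma dotv_multiplier_monotone (R : realDomainType) m (g g' l l' P P' : 'rV[R]_m) :
  (forall i, 0 <= l ord0 i) -> (forall i, 0 <= l' ord0 i) ->
  (forall i, g ord0 i <= P' ord0 i - P ord0 i) ->
  (forall i, g' ord0 i <= P ord0 i - P' ord0 i) ->
  dotv g l + dotv (l' - l) (- P) + (dotv g' l' + dotv (l - l') (- P')) <= 0.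
Proof.
move=> l_ge0 l'_ge0 g_le g'_le.
rewrite !dotv_sum -!big_split /= -oppr_ge0 -sumrN; apply: sumr_ge0 => i _.
rewrite !mxE; move: (l_ge0 i) (l'_ge0 i) (g_le i) (g'_le i); nra.
Qed.

Section PredictionKeyInequality.
Context {R : realType} {n m : nat}.
Implicit Types (x : 'rV[R]_n) (l : 'rV[R]_m).

Context {Phi : 'rV[R]_n -> 'rV[R]_m}.
Hypothesis Phi_convex : forall i : 'I_m, convexf (fun x => Phi x ord0 i).
Hypothesis Phi_diff : forall x, differentiable Phi x.

Lemma Gam_monotone x x' l l' :
  (forall i, 0 <= l ord0 i) -> (forall i, 0 <= l' ord0 i) ->
  dotv (pairw x' l' - pairw x l) (Gam Phi x l)
  + dotv (pairw x l - pairw x' l') (Gam Phi x' l') <= 0.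
Proof.
move=> l_ge0 l'_ge0.
rewrite !pairwB /Gam !dotv_row_mx /DPhi !dotv_mulmx_tr.
by apply: dotv_multiplier_monotone => // i; apply: convexf_jacobian_le.
Qed.

Lemma prediction_key_inequality {X : set 'rV[R]_n} {f : 'rV[R]_n -> R}
    {Q : 'M[R]_(n + m)} {wk : 'rV[R]_(n + m)} {xt lt xs ls} :
  Omega X xt lt ->
  (forall x l, Omega X x l ->
     bilf (pairw x l - pairw xt lt) Q (wk - pairw xt lt)
       <= f x - f xt + dotv (pairw x l - pairw xt lt) (Gam Phi xt lt)) ->
  OmegaStar X f Phi xs ls ->
  bilf (pairw xs ls - pairw xt lt) Q (wk - pairw xt lt) <= 0.
Proof.
move=> [Xt lt_ge0] VI [[Xs ls_ge0] opt].
have := VI xs ls (conj Xs ls_ge0); have := opt xt lt (conj Xt lt_ge0).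
have := Gam_monotone xt xs lt ls lt_ge0 ls_ge0.
lra.
Qed.

End PredictionKeyInequality.

Theorem theorem4 (R : realType) (n m : nat)
  (X : set 'rV[R]_n) (f : 'rV[R]_n -> R) (Phi : 'rV[R]_n -> 'rV[R]_m)
  (hXne : X !=set0) (hXcl : closed X) (hXcv : convexs X)
  (hf : convexf f)
  (hPhic : forall i : 'I_m, convexf (fun x => Phi x ord0 i))
  (hPhid : forall x, differentiable Phi x)
  (hPhiC1 : continuous (fun x => jacobian Phi x))
  (r s beta : R) (M : 'M[R]_(n + m))
  (xk xt : 'rV[R]_n) (lk lt : 'rV[R]_m) (w1 : 'rV[R]_(n + m))
  (hr : 0 < r) (hs : 0 < s) (hM : M \in unitmx)
  (hOt : Omega X xt lt)
  (hVI : forall (x : 'rV[R]_n) (l : 'rV[R]_m), Omega X x l ->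
     f x - f xt + dotv (pairw x l - pairw xt lt) (Gam Phi xt lt)
       >= bilf (pairw x l - pairw xt lt) (Qmat Phi r s xt) (pairw xk lk - pairw xt lt))
  (hbeta : 0 < beta)
  (hHsym : (Qmat Phi r s xt *m invmx M)^T = Qmat Phi r s xt *m invmx M)
  (hHpd : posdef (Qmat Phi r s xt *m invmx M))
  (hGpd : posdef ((Qmat Phi r s xt)^T + Qmat Phi r s xt
                   - beta *: (M^T *m (Qmat Phi r s xt *m invmx M) *m M)))
  (hw1 : w1 = pairw xk lk - beta *: (M *m (pairw xk lk - pairw xt lt)^T)^T) :
  forall (xs : 'rV[R]_n) (ls : 'rV[R]_m), OmegaStar X f Phi xs ls ->
    qf (Qmat Phi r s xt *m invmx M) (pairw xs ls - w1)
      <= qf (Qmat Phi r s xt *m invmx M) (pairw xs ls - pairw xk lk)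
         - beta * qf ((Qmat Phi r s xt)^T + Qmat Phi r s xt
                   - beta *: (M^T *m (Qmat Phi r s xt *m invmx M) *m M))
                 (pairw xk lk - pairw xt lt).
Proof.
move=> xs ls hstar.
have key := prediction_key_inequality hPhic hPhid hOt hVI hstar.
have HM_Q : (Qmat Phi r s xt *m invmx M) *m M = Qmat Phi r s xt by rewrite mulmxKV.
rewrite hw1 (qf_correction_step beta _ _ _ hHsym HM_Q) gerDl.
by rewrite pmulr_rle0 // mulr_gt0.
Qed.
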